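(* Let $\mathbf{A}\in\mathbb{R}^{m\times n}$, $\mathbf{b}\in\mathbb{R}^m$, $\mathbf{c}\in\mathbb{R}^n$ define the integer linear program $\min_{\mathbf{x}}\{\mathbf{c}^\top\mathbf{x} \mid \mathbf{A}\mathbf{x}\le \mathbf{b},\ \mathbf{x}\in\mathbb{Z}^n\}$, with bipartite representation $\mathcal{A}=\begin{bmatrix}\mathbf{A}&\mathbf{b}\\ \mathbf{c}^\top&0\end{bmatrix}\in\mathbb{R}^{(m+1)\times(n+1)}$. Let $f_\theta$ be a map from such $(m+1)\times(n+1)$ matrices to $\mathbb{R}^n$ that is permutation-equivariant with respect to variables and permutation-invariant with respect to constraints, i.e. $f_\theta(\pi^c(\mathcal{M}))=\pi^v(f_\theta(\mathcal{M}))$ for all $\pi\in S_n$ and $f_\theta(\sigma^r(\mathcal{M}))=f_\theta(\mathcal{M})$ for all $\sigma\in S_m$, for every input $\mathcal{M}$. If $\pi\in S_n$ is a formulation symmetry of the ILP, then $f_\theta(\mathcal{A})_i=f_\theta(\mathcal{A})_{\pi(i)}$ for all $i\in\{1,\dots,n\}$. Furthermore, for every orbit $\mathcal{O}$ of $\{1,\dots,n\}$ under the symmetry group $\mathcal{G}$ of the ILP, $f_\theta(\mathcal{A})_i=f_\theta(\mathcal{A})_j$ for all $i,j\in\mathcal{O}$.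
   Context: $S_n$ denotes the set of all permutations (bijections) of $\{1,\dots,n\}$. For $\pi\in S_n$, a vector $\mathbf{y}$ and a matrix $\mathbf{X}$ with at least $n$ rows/columns: $\pi^v(\mathbf{y})=[y_{\pi(1)},\dots,y_{\pi(n)},y_{n+1},\dots]^\top$ (permuting the top-most $n$ entries), $\pi^r(\mathbf{X})=[\mathbf{X}_{\pi(1),:},\dots,\mathbf{X}_{\pi(n),:},\mathbf{X}_{n+1,:},\dots]^\top$ (permuting the top-most $n$ rows), and $\pi^c(\mathbf{X})=[\mathbf{X}_{:,\pi(1)},\dots,\mathbf{X}_{:,\pi(n)},\mathbf{X}_{:,n+1},\dots]$ (permuting the left-most $n$ columns); analogously for $\sigma\in S_m$. A permutation $\pi\in S_n$ is a formulation symmetry of the ILP if there exists $\sigma\in S_m$ with $\pi^v(\mathbf{c})=\mathbf{c}$, $\sigma^v(\mathbf{b})=\mathbf{b}$, and $A_{\sigma(i),\pi(j)}=A_{i,j}$ for all $i,j$. The set of all formulation symmetries forms a group $\mathcal{G}$ (the symmetry group). The orbit of $i\in\{1,\dots,n\}$ under $\mathcal{G}$ is $\{\pi(i)\mid \pi\in\mathcal{G}\}$. *)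

(* Indices are 0-based: 'I_n = {0,...,n-1}. *)
From HB Require Import structures.
From mathcomp Require Import all_boot all_order all_algebra all_fingroup.
From mathcomp Require Import all_classical all_reals.
Set Implicit Arguments. Unset Strict Implicit. Unset Printing Implicit Defensive.
Import Order.TTheory GRing.Theory Num.Theory.
Local Open Scope ring_scope.

(* Extension of a permutation s of 'I_k to 'I_k.+1 fixing the last index k
   (so that s acts on the "top-most / left-most" k entries only). *)
Definition ext_perm (k : nat) (s : 'S_k) (i : 'I_k.+1) : 'I_k.+1 :=
  match unlift ord_max i with
  | Some j => lift ord_max (s j)
  | None => ord_max
  end.

Definition permc (R : Type) (m n : nat) (p : 'S_n) (X : 'M[R]_(m.+1, n.+1))
  : 'M[R]_(m.+1, n.+1) := \matrix_(i, j) X i (ext_perm p j).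

Definition permr (R : Type) (m n : nat) (s : 'S_m) (X : 'M[R]_(m.+1, n.+1))
  : 'M[R]_(m.+1, n.+1) := \matrix_(i, j) X (ext_perm s i) j.

Definition bipartite (R : nmodType) (m n : nat)
  (A : 'M[R]_(m, n)) (b : 'cV[R]_m) (c : 'cV[R]_n) : 'M[R]_(m.+1, n.+1) :=
  \matrix_(i, j)
    match unlift ord_max i, unlift ord_max j with
    | Some i', Some j' => A i' j'
    | Some i', None => b i' 0
    | None, Some j' => c j' 0
    | None, None => 0
    end.

Definition formulation_symmetry (R : eqType) (m n : nat)
  (A : 'M[R]_(m, n)) (b : 'cV[R]_m) (c : 'cV[R]_n) (p : 'S_n) : bool :=
  [exists s : 'S_m,
    [&& [forall j, c (p j) 0 == c j 0],
        [forall i, b (s i) 0 == b i 0] &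
        [forall i, forall j, A (s i) (p j) == A i j]]].

Definition symmetry_group (R : eqType) (m n : nat)
  (A : 'M[R]_(m, n)) (b : 'cV[R]_m) (c : 'cV[R]_n) : {set 'S_n} :=
  [set p | formulation_symmetry A b c p].

Definition perm_orbit (n : nat) (G : {set 'S_n}) (i : 'I_n) : {set 'I_n} :=
  [set (p : 'S_n) i | p in G].

From HB Require Import structures.
From mathcomp Require Import all_boot all_order all_algebra all_fingroup.
From mathcomp Require Import all_classical all_reals.
Local Open Scope ring_scope.

(* A formulation symmetry (pi, sigma) leaves the bipartite representation
   unchanged under column permutation by pi and row permutation by sigma;
   equivariance in the columns and invariance in the rows then force the
   output of f to be unchanged by pi, and composing two symmetries through a
   common orbit point makes it constant on orbits. *)

Lemma ext_perm_unlift (k : nat) (s : 'S_k) (i : 'I_k.+1) :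
  unlift ord_max (ext_perm s i) = omap s (unlift ord_max i).
Proof.
rewrite /ext_perm; case: (unlift ord_max i) => [j|] /=; first by rewrite liftK.
by rewrite unlift_none.
Qed.

Lemma permr_permc_bipartite (R : nmodType) (m n : nat)
  (A : 'M[R]_(m, n)) (b : 'cV[R]_m) (c : 'cV[R]_n) (p : 'S_n) (s : 'S_m) :
  (forall j, c (p j) 0 = c j 0) -> (forall i, b (s i) 0 = b i 0) ->
  (forall i j, A (s i) (p j) = A i j) ->
  permr s (permc p (bipartite A b c)) = bipartite A b c.
Proof.
move=> hc hb hA; apply/matrixP => i j.
rewrite /permr /permc /bipartite !mxE !ext_perm_unlift.
by case: (unlift ord_max i) => [i'|]; case: (unlift ord_max j) => [j'|] /=.
Qed.

Lemma formulation_symmetry_fixes_bipartite (R : nmodType) (m n : nat)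
  (A : 'M[R]_(m, n)) (b : 'cV[R]_m) (c : 'cV[R]_n) (p : 'S_n) :
  formulation_symmetry A b c p ->
  exists s : 'S_m, permr s (permc p (bipartite A b c)) = bipartite A b c.
Proof.
case/existsP=> s /and3P[/forallP hc /forallP hb /forallP hA].
exists s; apply: permr_permc_bipartite => [j|i|i j]; apply/eqP => //.
exact: (forallP (hA i)).
Qed.

Section EquivariantMaps.

Variables (R : Type) (m n : nat) (f : 'M[R]_(m.+1, n.+1) -> 'cV[R]_n).
Hypothesis f_equiv : forall (p : 'S_n) (M : 'M[R]_(m.+1, n.+1)) (i : 'I_n),
  f (permc p M) i 0 = f M (p i) 0.
Hypothesis f_inv : forall (s : 'S_m) (M : 'M[R]_(m.+1, n.+1)),
  f (permr s M) = f M.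

Lemma equivariant_fixed_input (M : 'M[R]_(m.+1, n.+1)) (p : 'S_n) (s : 'S_m) :
  permr s (permc p M) = M -> forall i, f M i 0 = f M (p i) 0.
Proof. by move=> fixM i; rewrite -{1}fixM f_inv f_equiv. Qed.

End EquivariantMaps.

Lemma constant_on_perm_orbit (T : Type) (n : nat) (G : {set 'S_n})
  (v : 'I_n -> T) :
  (forall p, p \in G -> forall i, v i = v (p i)) ->
  forall k i j, i \in perm_orbit G k -> j \in perm_orbit G k -> v i = v j.
Proof.
move=> vG k _ _ /imsetP[p1 Gp1 ->] /imsetP[p2 Gp2 ->].
by rewrite -(vG _ Gp1) -(vG _ Gp2).
Qed.

Theorem proposition1 (R : realType) (m n : nat)
  (A : 'M[R]_(m, n)) (b : 'cV[R]_m) (c : 'cV[R]_n)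
  (f : 'M[R]_(m.+1, n.+1) -> 'cV[R]_n)
  (f_equiv : forall (p : 'S_n) (M : 'M[R]_(m.+1, n.+1)) (i : 'I_n),
      f (permc p M) i 0 = f M (p i) 0)
  (f_inv : forall (s : 'S_m) (M : 'M[R]_(m.+1, n.+1)),
      f (permr s M) = f M) :
  (forall p : 'S_n, formulation_symmetry A b c p ->
     forall i : 'I_n, f (bipartite A b c) i 0 = f (bipartite A b c) (p i) 0)
  /\
  (forall (k i j : 'I_n),
     i \in perm_orbit (symmetry_group A b c) k ->
     j \in perm_orbit (symmetry_group A b c) k ->
     f (bipartite A b c) i 0 = f (bipartite A b c) j 0).
Proof.
have symmetry_invariance : forall p : 'S_n, formulation_symmetry A b c p ->
    forall i, f (bipartite A b c) i 0 = f (bipartite A b c) (p i) 0.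
  move=> p /formulation_symmetry_fixes_bipartite[s fixA].
  exact: equivariant_fixed_input f_equiv f_inv _ _ _ fixA.
split=> //; apply: constant_on_perm_orbit => p.
by rewrite inE; apply: symmetry_invariance.
Qed.
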